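(* Let $\mathfrak S$ be a commutative semiring with multiplicative identity $1$ whose Jacobson radical (the intersection of all maximal ideals) is the zero ideal. Let $\sigma_{\mathfrak S}$ be a set of ideals of $\mathfrak S$ containing all maximal ideals of $\mathfrak S$, endowed with the ideal topology, and let $\mathcal S=\{\mathfrak a^{\uparrow}\mid \mathfrak a \text{ an ideal of }\mathfrak S\}$ be its subbase of closed sets. If $\mathcal S$ strongly disconnects $\sigma_{\mathfrak S}$, then $\mathfrak S$ has a non-trivial idempotent element, i.e. some $e\in\mathfrak S$ with $e^2=e$, $e\neq0$, $e\neq1$.
   Context: A semiring $(\mathfrak S,+,0,\cdot,1)$ has $(\mathfrak S,+,0)$ a commutative monoid, $(\mathfrak S,\cdot,1)$ a monoid, $0r=r0=0$, and two-sided distributivity; all semirings are commutative. An ideal is a nonempty proper subset closed under addition and under multiplication by elements of $\mathfrak S$; maximal means not properly contained in another ideal. For an ideal $\mathfrak a$, $\mathfrak a^{\uparrow}=\{\mathfrak x\in\sigma_{\mathfrak S}\mid\mathfrak a\subseteq\mathfrak x\}$; the ideal topology has these sets as a subbasis of closed sets. A closed subbase $\mathcal S$ of a space $X$ strongly disconnects $X$ if there exist non-empty $A,B\in\mathcal S$ with $X=A\cup B$ and $A\cap B=\emptyset$. *)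

From HB Require Import structures.
From mathcomp Require Import all_boot all_algebra.
From mathcomp Require Import boolp classical_sets.
Set Implicit Arguments. Unset Strict Implicit. Unset Printing Implicit Defensive.
Import GRing.Theory.
Local Open Scope classical_set_scope.
Local Open Scope ring_scope.

(* Semirings: commutative semirings with 0 and 1 (possibly 0 = 1), i.e.
   MathComp's comPzSemiRingType. *)

Definition is_ideal (R : comPzSemiRingType) (a : set R) : Prop :=
  [/\ a !=set0, a <> setT,
      (forall x y, a x -> a y -> a (x + y)) &
      (forall r x, a x -> a (r * x))].

Definition is_maximal_ideal (R : comPzSemiRingType) (m : set R) : Prop :=
  is_ideal m /\ (forall b : set R, is_ideal b -> m `<=` b -> b = m).

Definition jacobson_radical (R : comPzSemiRingType) : set R :=
  [set x | forall m : set R, is_maximal_ideal m -> m x].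

Definition up_set (R : comPzSemiRingType) (sigma : set (set R)) (a : set R)
  : set (set R) := [set x | sigma x /\ a `<=` x].

Definition ideal_subbase (R : comPzSemiRingType) (sigma : set (set R))
  : set (set (set R)) := [set up_set sigma a | a in [set a : set R | is_ideal a]].

Definition strongly_disconnects (T : Type) (X : set T) (S : set (set T)) : Prop :=
  exists A B, [/\ S A /\ S B, A !=set0, B !=set0, X = A `|` B & A `&` B = set0].

(* If sigma is the disjoint union of the closed sets a^up and b^up, then
   disjointness forces a + b to be the whole semiring (otherwise a maximal
   ideal above a + b lies in both), so x + y = 1 for some x in a and y in b.
   Covering forces every maximal ideal to contain a or b, so x y lies in the
   Jacobson radical and hence vanishes.  Then x = x (x + y) = x^2, and x is
   neither 0 (else 1 = y in b) nor 1 (as x lies in the proper ideal a). *)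

From HB Require Import structures.
From mathcomp Require Import all_boot all_algebra.
From mathcomp Require Import boolp classical_sets.
Import GRing.Theory.
Local Open Scope classical_set_scope.
Local Open Scope ring_scope.

Section Ideals.

Set Implicit Arguments.
Unset Strict Implicit.

Variable R : comPzSemiRingType.
Implicit Types (a b I J : set R) (x y : R).

Lemma ideal_not1 J : is_ideal J -> ~ J 1.
Proof.
case=> _ JT _ JM J1; apply: JT; apply/seteqP; split => // r _.
by rewrite -(mulr1 r); apply: JM.
Qed.

Lemma ideal0 J : is_ideal J -> J 0.
Proof. by case=> -[x Jx] _ _ JM; rewrite -(mul0r x); apply: JM. Qed.

Lemma ideal_intro J :
  J !=set0 -> ~ J 1 -> (forall x y, J x -> J y -> J (x + y)) ->
  (forall r x, J x -> J (r * x)) -> is_ideal J.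
Proof. by move=> J0 J1 JD JM; split => // JT; apply: J1; rewrite JT. Qed.

Lemma bigcup_chain_ideal (F : set (set R)) :
  (\bigcup_(J in F) J) !=set0 -> (forall J, F J -> J !=set0 -> is_ideal J) ->
  total_on F subset -> is_ideal (\bigcup_(J in F) J).
Proof.
move=> F0 Fideal Ftot; apply: ideal_intro => //.
- by case=> J FJ J1; exact: ideal_not1 (Fideal J FJ (ex_intro _ 1 J1)) J1.
- move=> x y [K FK Kx] [L FL Ly].
  have sumM M : F M -> K `<=` M -> L `<=` M -> (\bigcup_(J in F) J) (x + y).
    move=> FM KM LM; have [_ _ MD _] := Fideal M FM (ex_intro _ x (KM x Kx)).
    by exists M => //; apply: MD; [exact: KM|exact: LM].
  by case: (Ftot K L FK FL) => [KL|LK]; [exact: (sumM L)|exact: (sumM K)].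
- move=> r x [K FK Kx]; have [_ _ _ KM] := Fideal K FK (ex_intro _ x Kx).
  by exists K => //; apply: KM.
Qed.

Lemma exists_maximal_ideal I : is_ideal I -> exists2 m, is_maximal_ideal m & I `<=` m.
Proof.
move=> idI; have I0 : I !=set0 by case: idI.
(* [set0] is admitted so that the empty chain has an upper bound. *)
pose P := [set J | J = set0 \/ is_ideal J /\ I `<=` J].
have [|M [PM Mmax]] := @Zorn_bigcup R P.
  move=> F FP Ftot.
  have [[x [J FJ Jx]]|Fempty] := pselect ((\bigcup_(J in F) J) !=set0); last first.
    by left; apply/seteqP; split => // y Fy; apply: Fempty; exists y.
  have Fideal K : F K -> K !=set0 -> is_ideal K /\ I `<=` K.
    by move=> FK [y Ky]; case: (FP K FK) => // K0; rewrite K0 in Ky.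
  have [_ IJ] := Fideal J FJ (ex_intro _ x Jx).
  right; split; last by move=> y /IJ Jy; exists J.
  by apply: bigcup_chain_ideal => //; [exists x, J|move=> K FK /(Fideal K FK) []].
case: PM => [M0|[idM IM]].
  have PI : P I by right; split.
  by case: (Mmax I _ PI); rewrite M0; split => // I0'; case: I0 => y /I0'.
exists M => //; split => // J idJ MJ; apply: contrapT => JM.
apply: (Mmax J); first by split => // JM'; apply/JM/seteqP.
by right; split => //; apply: subset_trans MJ.
Qed.

Definition ideal_sum a b := [set x + y | x in a & y in b].

Lemma ideal_sum_ideal a b :
  is_ideal a -> is_ideal b -> ~ ideal_sum a b 1 -> is_ideal (ideal_sum a b).
Proof.
move=> ida idb ab1; have [_ _ aD aM] := ida; have [_ _ bD bM] := idb.
apply: ideal_intro => //.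
- by exists (0 + 0), 0; [exact: ideal0|exists 0 => //; exact: ideal0].
- move=> _ _ [x ax [y bY <-]] [x' ax' [y' bY' <-]].
  by exists (x + x'); [exact: aD|exists (y + y'); [exact: bD|rewrite addrACA]].
- move=> r _ [x ax [y bY <-]].
  by exists (r * x); [exact: aM|exists (r * y); [exact: bM|rewrite mulrDr]].
Qed.

Lemma ideal_suml a b : is_ideal b -> a `<=` ideal_sum a b.
Proof. by move=> idb x ax; exists x => //; exists 0; [exact: ideal0|rewrite addr0]. Qed.

Lemma ideal_sumr a b : is_ideal a -> b `<=` ideal_sum a b.
Proof. by move=> ida y bY; exists 0; [exact: ideal0|exists y => //; rewrite add0r]. Qed.

Variable sigma : set (set R).
Hypothesis sigma_maximal : forall m, is_maximal_ideal m -> sigma m.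

Lemma up_setI0_comaximal a b :
  is_ideal a -> is_ideal b -> up_set sigma a `&` up_set sigma b = set0 ->
  ideal_sum a b 1.
Proof.
move=> ida idb ab0; apply: contrapT => ab1.
have [m maxm abm] := exists_maximal_ideal (ideal_sum_ideal ida idb ab1).
have : (up_set sigma a `&` up_set sigma b) m.
  have sm := sigma_maximal maxm.
  by split; split => //; apply: subset_trans abm; [exact: ideal_suml|exact: ideal_sumr].
by rewrite ab0.
Qed.

Lemma up_setU_cover_jacobson a b x y :
  is_ideal a -> is_ideal b -> sigma `<=` up_set sigma a `|` up_set sigma b ->
  a x -> b y -> @jacobson_radical R (x * y).
Proof.
move=> [_ _ _ aM] [_ _ _ bM] cover ax bY m /[dup] maxm /sigma_maximal /cover.
by case=> -[_ m_sup]; [rewrite mulrC; apply/m_sup/aM|apply/m_sup/bM].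
Qed.

End Ideals.

Lemma idempotent_of_complement (R : comPzSemiRingType) (x y : R) :
  x + y = 1 -> x * y = 0 -> x * x = x.
Proof. by move=> xy1 xy0; rewrite -[RHS]mulr1 -xy1 mulrDr xy0 addr0. Qed.

Theorem proposition3p11 (R : comPzSemiRingType) (sigma : set (set R)) :
  @jacobson_radical R = [set 0] ->
  (forall x, sigma x -> is_ideal x) ->
  (forall m, is_maximal_ideal m -> sigma m) ->
  strongly_disconnects sigma (ideal_subbase sigma) ->
  exists e : R, [/\ e * e = e, e != 0 & e != 1].
Proof.
move=> jac0 _ sigma_max [? [? [[[a ida <-] [b idb <-]] _ _ cover disj]]].
have [x ax [y bY xy1]] := up_setI0_comaximal sigma_max ida idb disj.
have xy0 : x * y = 0.
  have sub_cover : sigma `<=` up_set sigma a `|` up_set sigma b by rewrite -cover.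
  by have := up_setU_cover_jacobson sigma_max ida idb sub_cover ax bY; rewrite jac0.
exists x; split; first exact: idempotent_of_complement xy1 xy0.
- by apply/eqP => x0; apply: (ideal_not1 idb); rewrite -xy1 x0 add0r.
- by apply/eqP => x1; apply: (ideal_not1 ida); rewrite -x1.
Qed.
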